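(* Let $n\ge3$, $k\in\mathbf{N}$, $\mathbf{A}$ an alphabet of $n$ letters, and $$\mathbf{S}_3^{n,k}=\{XY : X,Y\in\mathbf{A}^*,\ |X|=|Y|\ge k+1,\ d(X,Y)\le k\}.$$ Then $\mathbf{S}_3^{n,k}$ is incomplete, i.e. there exist arbitrarily long (indeed, an infinite) words over $\mathbf{A}$ free from $\mathbf{S}_3^{n,k}$.
   Context: A word over $\mathbf{A}$ is a finite sequence of letters; $\mathbf{A}^*$ is the set of all words; $|X|$ is the length of $X$. For words of equal length, $d(X,Y)$ is the Hamming distance. A subword is a block of consecutive letters. For $\mathbf{S}\subseteq\mathbf{A}^*$, a word (finite or infinite) is free from $\mathbf{S}$ if none of its finite subwords belongs to $\mathbf{S}$. $\mathbf{S}$ is complete if there is $k\in\mathbf{N}$ such that every word free from $\mathbf{S}$ has length less than $k$; otherwise it is incomplete. *)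

From mathcomp Require Import all_boot.
Set Implicit Arguments. Unset Strict Implicit. Unset Printing Implicit Defensive.

(* Hamming distance of two words (used only for words of equal length). *)
Definition hamming (A : eqType) (X Y : seq A) : nat :=
  count (fun p => p.1 != p.2) (zip X Y).

Definition S3 (A : eqType) (k : nat) (w : seq A) : Prop :=
  exists X Y : seq A,
    w = X ++ Y /\ size X = size Y /\ k.+1 <= size X /\ hamming X Y <= k.

Definition subword (A : Type) (u w : seq A) : Prop :=
  exists a b : seq A, w = a ++ u ++ b.

Definition free (A : Type) (S : seq A -> Prop) (w : seq A) : Prop :=
  forall u, subword u w -> ~ S u.

Definition free_inf (A : Type) (S : seq A -> Prop) (f : nat -> A) : Prop :=
  forall i l, ~ S (mkseq (fun j => f (i + j)) l).

Definition complete (A : Type) (S : seq A -> Prop) : Prop :=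
  exists K : nat, forall w : seq A, free S w -> size w < K.

From mathcomp Require Import all_boot zify.
Set Implicit Arguments. Unset Strict Implicit. Unset Printing Implicit Defensive.

(* The Thue-Morse word is overlap-free, so the word recording where it changes
   value is a square-free word over three letters.  Repeat every letter of a
   square-free word L = k+1 times.  In a factor XY with |X| = |Y| = m = tL + r,
   sort the positions of X into L columns by their residue mod L: along a
   column, X and Y read the square-free word at a fixed distance t or t + 1,
   so almost every column contains a mismatch.  If some column has none, the
   square-free word contains u a u with |u| = t, and then every column at
   distance t mismatches at all of its positions; counting shows that X and Y
   still differ in at least L positions, so XY is not in S_3. *)

Definition square_free (T : Type) (s : nat -> T) :=
  forall i m, 0 < m -> ~ (forall j, j < m -> s (i + j) = s (i + m + j)).

Definition overlap_free (T : Type) (s : nat -> T) :=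
  forall i m, 0 < m -> ~ (forall j, j <= m -> s (i + j) = s (i + m + j)).

(* Thue-Morse: parity of the binary digit sum.  Halving reaches 0 within [n]
   steps, so fuel [n] suffices. *)
Fixpoint tm_fuel (fuel n : nat) : bool :=
  if fuel is f.+1 then (if n is 0 then false else odd n (+) tm_fuel f n./2)
  else false.

Definition tm (n : nat) : bool := tm_fuel n n.
Arguments tm : simpl never.

Lemma tm_fuel_stable f1 f2 n : n <= f1 -> n <= f2 -> tm_fuel f1 n = tm_fuel f2 n.
Proof.
elim: f1 f2 n => [|f1 IH] [|f2] [|n] //= le1 le2.
by rewrite (IH f2); lia.
Qed.

Lemma tm_half n : tm n = odd n (+) tm n./2.
Proof.
case: n => [|n] //; rewrite /tm /=; congr addb.
by apply: tm_fuel_stable; lia.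
Qed.

Lemma tm_bit q (b : bool) : tm (q.*2 + b) = b (+) tm q.
Proof. by rewrite tm_half oddD odd_double addnC half_bit_double; case: b. Qed.

Lemma tm_double q : tm q.*2 = tm q.
Proof. by have := tm_bit q false; rewrite addn0. Qed.

Lemma tm_double_succ q : tm q.*2.+1 = ~~ tm q.
Proof. by have := tm_bit q true; rewrite addn1. Qed.

Lemma tm_pair q : tm q.*2.+1 = ~~ tm q.*2.
Proof. by rewrite tm_double tm_double_succ. Qed.

Lemma tm_no_triple n : tm n = tm n.+1 -> tm n.+1 = tm n.+2 -> False.
Proof.
rewrite -[n]odd_double_half; set q := n./2; case: (odd n); rewrite ?add1n ?add0n.
- by rewrite -doubleS (tm_pair q.+1) => _; case: (tm _).
- by rewrite (tm_pair q); case: (tm _).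
Qed.

Lemma tm_even_neq n : ~~ odd n -> tm n != tm n.+1.
Proof.
move=> even_n; rewrite -[n]odd_double_half (negbTE even_n) add0n tm_pair.
by case: (tm _).
Qed.

Lemma tm_overlap_half i m :
    (forall j, j <= m.*2 -> tm (i + j) = tm (i + m.*2 + j)) ->
  forall j, j <= m -> tm (i./2 + j) = tm (i./2 + m + j).
Proof.
move=> ov j le_jm; have := ov j.*2; rewrite leq_double => /(_ le_jm).
have i_eq := odd_double_half i.
have -> : i + j.*2 = (i./2 + j).*2 + odd i by rewrite doubleD; lia.
have -> : i + m.*2 + j.*2 = (i./2 + m + j).*2 + odd i by rewrite !doubleD; lia.
by rewrite !tm_bit => /addbI.
Qed.

Lemma tm_overlap_odd_alternates i m : odd m ->
    (forall j, j <= m -> tm (i + j) = tm (i + m + j)) ->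
  forall j, j < m.*2 -> tm (i + j) != tm (i + j).+1.
Proof.
move=> odd_m ov j lt_j; case odd_ij: (odd (i + j)); last by rewrite tm_even_neq ?odd_ij.
case: (ltnP j m) => [lt_jm|le_mj].
- rewrite (ov j (ltnW lt_jm)) -addnS (ov j.+1 lt_jm) addnS tm_even_neq //.
  by rewrite addnAC oddD odd_ij odd_m.
- have lt_jm : j - m < m by lia.
  have -> : i + j = i + m + (j - m) by lia.
  rewrite -addnS -(ov _ (ltnW lt_jm)) -(ov _ lt_jm) addnS tm_even_neq //.
  by move: odd_ij; rewrite -{1}(subnKC le_mj) addnCA oddD odd_m.
Qed.

Lemma tm_no_alternating_run e :
  ~ (forall j, j < 4 -> tm (e.*2 + j) != tm (e.*2 + j).+1).
Proof.
move=> alt; move: (alt 0 isT) (alt 1 isT) (alt 2 isT) (alt 3 isT).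
rewrite !addnS !addn0 -!doubleS !tm_pair !tm_double => _ h1 _ h2.
by apply: (tm_no_triple (n := e)); move: h1 h2; case: (tm e); case: (tm e.+1); case: (tm e.+2).
Qed.

Lemma tm_overlap_free : overlap_free tm.
Proof.
move=> i m; elim/ltn_ind: m i => m IH i m_gt0 ov.
case odd_m: (odd m); last first.
  have m_eq : m = m./2.*2 by rewrite -[m in LHS]odd_double_half odd_m.
  rewrite m_eq in ov; apply: (IH m./2 _ i./2 _ (tm_overlap_half ov)); lia.
have alt := tm_overlap_odd_alternates odd_m ov.
case: (ltnP m 3) => [lt_m3|le_3m].
  have m1 : m = 1 by move: m_gt0 lt_m3 odd_m; clear; case: m => [|[|[|]]].
  rewrite m1 in ov; apply: (tm_no_triple (n := i)).
    by have := ov 0 isT; rewrite !addn0 addn1.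
  by have := ov 1 isT; rewrite !addn1.
apply: (tm_no_alternating_run (e := (i + odd i)./2)) => j lt_j4.
have -> : (i + odd i)./2.*2 + j = i + (odd i + j) by have := odd_double_half i; lia.
by apply: alt; have := odd_double_half i; lia.
Qed.

(* Thue's ternary word: [None] where [tm] repeats, else the value [tm] leaves. *)
Definition vtm (n : nat) : option bool :=
  if tm n == tm n.+1 then None else Some (tm n).

Lemma tm_succ_vtm n : tm n.+1 = tm n (+) (vtm n != None).
Proof. by rewrite /vtm; case: (tm n); case: (tm n.+1). Qed.

Lemma vtm_SomeE n b : vtm n = Some b -> tm n = b.
Proof. by rewrite /vtm; case: eqP => // _ []. Qed.

Lemma vtm_NoneE n : vtm n = None -> tm n = tm n.+1.
Proof. by rewrite /vtm; case: eqP. Qed.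

Lemma vtm_square_free : square_free vtm.
Proof.
move=> i t t_gt0 sq.
have shift_inv j : j <= t -> tm (i + j) (+) tm (i + t + j) = tm i (+) tm (i + t).
  elim: j => [|j IH] le_jt; first by rewrite !addn0.
  rewrite !addnS !tm_succ_vtm (sq j le_jt) -(IH (ltnW le_jt)).
  by case: (tm _); case: (tm _); case: (_ != _).
case shift: (tm i (+) tm (i + t)); last first.
  apply: (tm_overlap_free t_gt0 (i := i)) => j /shift_inv.
  by rewrite shift; case: (tm _); case: (tm _).
have vtm_None j : j < t -> vtm (i + j) = None.
  move=> lt_jt; case E: (vtm (i + j)) => [b|] //; have := shift_inv j (ltnW lt_jt).
  by rewrite (vtm_SomeE E) (vtm_SomeE (etrans (esym (sq j lt_jt)) E)) shift addbb.
apply: (tm_no_triple (n := i)); apply: vtm_NoneE.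
  by rewrite -(addn0 i) vtm_None.
case: (ltnP 1 t) => [lt_1t|le_t1]; first by rewrite -addn1 vtm_None.
have -> : i.+1 = i + t + 0 by lia.
by rewrite -sq // vtm_None.
Qed.

Lemma count_iota_sum (P : pred nat) n : count P (iota 0 n) = \sum_(c < n) P c.
Proof.
rewrite -sum1_count big_mkcond -(big_mkord xpredT (fun c => nat_of_bool (P c))).
by rewrite /index_iota subn0.
Qed.

Lemma count_iota_columns (P : pred nat) L t r : r <= L ->
  count P (iota 0 (t * L + r)) =
  \sum_(c < L) count (fun i => P (c + i * L)) (iota 0 (t + (c < r))).
Proof.
move=> le_rL; elim: t P => [|t IH] P.
  rewrite mul0n add0n count_iota_sum (big_ord_widen L (fun c => nat_of_bool (P c)) le_rL).
  by rewrite big_mkcond; apply: eq_bigr => c _; case: (c < r); rewrite /= ?mul0n ?addn0.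
rewrite mulSn -addnA iotaD count_cat (addnC 0 L) iotaDl count_map IH.
rewrite count_iota_sum -big_split; apply: eq_bigr => c _ /=.
rewrite mul0n addn0 (iotaDl 1 0) count_map; congr addn.
by apply: eq_count => i /=; rewrite mulSn addnCA.
Qed.

Lemma block_bounds L p c c0 i t r : c0 < L -> r <= c0 ->
    L <= (p + c0) %% L + r -> (p + c) %% L + r < L -> c + i * L < t * L + r ->
  (p + c0) %/ L <= (p + c) %/ L + i <= (p + c0) %/ L + t.
Proof.
move=> lt_c0L le_rc0 carry0 nocarry lt_ci; have L_gt0 : 0 < L by lia.
have := divn_eq (p + c) L; have := divn_eq (p + c0) L.
have := ltn_pmod (p + c) L_gt0; have := ltn_pmod (p + c0) L_gt0.
by move=> *; apply/andP; split; nia.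
Qed.

Lemma square_free_comp (T U : Type) (g : T -> U) (s : nat -> T) :
  injective g -> square_free s -> square_free (g \o s).
Proof. by move=> g_inj sf i m m_gt0 sq; apply: (sf i m m_gt0) => j /sq /g_inj. Qed.

Section BlowUp.

Variables (T : eqType) (s : nat -> T).
Hypothesis s_sf : square_free s.

Lemma square_free_neq_succ n : s n != s n.+1.
Proof.
apply/eqP => eq_n; apply: (s_sf (i := n) (m := 1)) => // j; rewrite ltnS leqn0 => /eqP ->.
by rewrite !addn0 addn1.
Qed.

Lemma square_free_count_mismatch a d n : 0 < d -> d <= n ->
  0 < count (fun i => s (a + i) != s (a + d + i)) (iota 0 n).
Proof.
move=> d_gt0 le_dn; rewrite -has_count; apply/negPn/negP => /hasPn agree.
apply: (s_sf (i := a) d_gt0) => j lt_jd; apply/eqP.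
by have := agree j; rewrite mem_iota /= negbK; apply; lia.
Qed.

Lemma shifted_agreement_mismatch a t : 0 < t ->
    (forall i, i < t -> s (a + i) = s (a + t.+1 + i)) ->
  forall b, a <= b <= a + t -> s b != s (b + t).
Proof.
move=> t_gt0 agree b /andP[le_ab le_bt]; case: (ltnP b (a + t)) => [lt_bt|le_tb].
  rewrite -{1}(subnKC le_ab) agree; last lia.
  have -> : a + t.+1 + (b - a) = (b + t).+1 by lia.
  by rewrite eq_sym square_free_neq_succ.
have -> : b = a + t by lia.
have -> : a + t + t = a + t.+1 + t.-1 by lia.
rewrite -agree; last lia.
have -> : a + t = (a + t.-1).+1 by lia.
by rewrite eq_sym square_free_neq_succ.
Qed.

Variables (L p t r : nat).
Hypotheses (L_gt0 : 0 < L) (t_gt0 : 0 < t) (lt_rL : r < L).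

(* The word is [fun x => s (x %/ L)] and the factor XY starts at [p].  Position
   [c + i * L] of X (column [c]) sits in block [(p + c) %/ L + i], and its
   partner in Y lies [t + carry c] blocks further. *)
Let m := t * L + r.
Let mismatch j := s ((p + j) %/ L) != s ((p + m + j) %/ L).
Let carry c : bool := L <= (p + c) %% L + r.
Let column c := count (fun i => mismatch (c + i * L)) (iota 0 (t + (c < r))).

Lemma mismatch_column c i : mismatch (c + i * L) =
  (s ((p + c) %/ L + i) != s ((p + c) %/ L + (carry c + t) + i)).
Proof.
rewrite /mismatch.
have -> : p + (c + i * L) = i * L + (p + c) by lia.
have -> : p + m + (c + i * L) = (i + t) * L + (p + c + r) by rewrite /m; lia.
rewrite !divnMDl // (divnD (p + c) r L_gt0) (divn_small lt_rL) (modn_small lt_rL).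
by rewrite addn0 /carry; congr (s _ != s _); lia.
Qed.

Lemma column_gt0 c : ~~ carry c || (c < r) -> 0 < column c.
Proof.
move=> carry_or_lt; rewrite /column; under eq_count do rewrite mismatch_column.
apply: square_free_count_mismatch; first by rewrite addn_gt0 t_gt0 orbT.
by move: carry_or_lt; case: (carry c); case: (c < r); rewrite ?addn0 ?addn1.
Qed.

Lemma column_eq0_agreement c0 : column c0 = 0 ->
  [/\ carry c0, r <= c0 &
      forall i, i < t -> s ((p + c0) %/ L + i) = s ((p + c0) %/ L + t.+1 + i)].
Proof.
move=> col0; have /andP[carry0 le_rc0] : carry c0 && (r <= c0).
  apply/negPn/negP; rewrite negb_and -ltnNge => /column_gt0.
  by rewrite col0.
split=> // i lt_it; apply/eqP; move/eqP: col0; rewrite /column.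
have -> : (c0 < r) = false by rewrite ltnNge le_rc0.
rewrite -leqn0 leqNgt -has_count => /hasPn /(_ i).
by rewrite mem_iota addn0 lt_it mismatch_column carry0 add1n negbK; apply.
Qed.

Lemma column_eq0_full c0 c : c0 < L -> column c0 = 0 -> c < L -> ~~ carry c ->
  column c = t + (c < r).
Proof.
move=> lt_c0L col0 lt_cL nocarry; have [carry0 le_rc0 agree] := column_eq0_agreement col0.
rewrite /column -[RHS](size_iota 0) -count_predT; apply: eq_in_count => i.
rewrite mem_iota add0n => /andP[_ lt_i] /=.
rewrite mismatch_column (negbTE nocarry) add0n addnAC.
apply: (shifted_agreement_mismatch t_gt0 agree); apply: (block_bounds (r := r)) => //.
  by rewrite ltnNge.
by move: lt_i; case: (ltnP c r) => /= [lt_cr|le_rc] lt_i; nia.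
Qed.

Lemma sum_carry : \sum_(c < L) carry c = \sum_(c < L) (c < r).
Proof.
pose h (c : 'I_L) := rev_ord (Ordinal (ltn_pmod (p + c) L_gt0)).
have h_inj : injective h.
  move=> c1 c2 /rev_ord_inj /(congr1 val) /= /eqP.
  by rewrite eqn_modDl !modn_small // => /eqP /val_inj.
rewrite [RHS](reindex_inj h_inj); apply: eq_bigr => c _ /=; congr nat_of_bool.
have := ltn_pmod (p + c) L_gt0; rewrite /carry => lt_mod; apply/idP/idP; lia.
Qed.

Lemma window_mismatches : L <= count mismatch (iota 0 m).
Proof.
rewrite count_iota_columns ?(ltnW lt_rL) //.
case: (pickP (fun c : 'I_L => column c == 0)) => [c0 /eqP col0 | col_gt0]; last first.
  rewrite -[L in L <= _]card_ord -sum1_card; apply: leq_sum => c _.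
  by rewrite lt0n col_gt0.
have sum_bound : \sum_(c < L) (~~ carry c + (c < r)) = L.
  rewrite big_split /= -sum_carry -big_split /=.
  by rewrite -[RHS]card_ord -sum1_card; apply: eq_bigr => c _; rewrite addn_negb.
rewrite -[X in X <= _]sum_bound; apply: leq_sum => c _; rewrite -/(column c).
case: (boolP (carry c)) => [carry_c|nocarry] /=.
  by case: (ltnP c r) => //= lt_cr; apply: column_gt0; rewrite lt_cr orbT.
by rewrite (column_eq0_full (ltn_ord c0) col0) // leq_add2r.
Qed.

End BlowUp.

Lemma blowup_mismatches (T : eqType) (s : nat -> T) L p m :
    square_free s -> 0 < L -> L <= m ->
  L <= count (fun j => s ((p + j) %/ L) != s ((p + m + j) %/ L)) (iota 0 m).
Proof.
move=> s_sf L_gt0 le_Lm; rewrite (divn_eq m L).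
by apply: window_mismatches; rewrite ?divn_gt0 ?ltn_pmod.
Qed.

Lemma mkseq_factor (T : Type) (g : nat -> T) (u v w : seq T) K :
  u ++ v ++ w = mkseq g K -> v = mkseq (fun j => g (size u + j)) (size v).
Proof.
move=> uvw; have size_uvw : size u + (size v + size w) = K.
  by rewrite -!size_cat uvw size_mkseq.
have := congr1 (fun x => take (size v) (drop (size u) x)) uvw.
rewrite /= drop_size_cat // take_size_cat // /mkseq -map_drop -map_take drop_iota take_iota.
have -> : minn (size v) (K - size u) = size v by apply/minn_idPl; lia.
rewrite add0n => ->.
by rewrite size_map size_iota -{1}[size u]addn0 iotaDl -map_comp.
Qed.

Lemma hamming_mkseq (T : eqType) (g h : nat -> T) n :
  hamming (mkseq g n) (mkseq h n) = count (fun j => g j != h j) (iota 0 n).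
Proof. by rewrite /hamming zip_map count_map. Qed.

Lemma free_inf_mkseq (T : Type) (S : seq T -> Prop) (f : nat -> T) K :
  free_inf S f -> free S (mkseq f K).
Proof. by move=> f_free u [a [b /esym/mkseq_factor ->]]; apply: f_free. Qed.

Lemma free_inf_S3 (A : eqType) k (f : nat -> A) :
    (forall p m, k < m -> k < count (fun j => f (p + j) != f (p + m + j)) (iota 0 m)) ->
  free_inf (@S3 A k) f.
Proof.
move=> sep i l [X [Y [XY [size_XY [lt_kX le_hk]]]]].
have X_eq := mkseq_factor (u := [::]) (esym XY).
have Y_eq : Y = mkseq (fun j => f (i + (size X + j))) (size Y).
  by apply: (mkseq_factor (g := fun j => f (i + j)) (w := [::]) (K := l)); rewrite cats0 XY.
move: le_hk; rewrite X_eq Y_eq -size_XY hamming_mkseq /= leqNgt.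
by under eq_count do rewrite add0n addnA; rewrite sep.
Qed.

Lemma inj_of_card_le (T U : finType) : #|T| <= #|U| -> exists g : T -> U, injective g.
Proof.
move=> le_TU; exists (fun x => enum_val (widen_ord le_TU (enum_rank x))).
by move=> x y /enum_val_inj [] /val_inj /enum_rank_inj.
Qed.

Theorem theorem5 (n k : nat) (A : finType) :
  3 <= n -> #|A| = n ->
  ~ complete (@S3 A k) /\ exists f : nat -> A, free_inf (@S3 A k) f.
Proof.
move=> le_3n card_A.
have [g g_inj] : exists g : option bool -> A, injective g.
  by apply: inj_of_card_le; rewrite card_option card_bool card_A.
pose f x := (g \o vtm) (x %/ k.+1).
have f_free : free_inf (@S3 A k) f.
  apply: free_inf_S3 => p m lt_km.
  exact: blowup_mismatches (square_free_comp g_inj vtm_square_free) _ lt_km.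
split; last by exists f.
move=> [K free_short]; have := free_short (mkseq f K) (free_inf_mkseq (K := K) f_free).
by rewrite size_mkseq ltnn.
Qed.
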